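(* Let $p(z)=z^n+a_nz^{n-1}+\cdots+a_2z+a_1$ be a complex monic polynomial with $n\geq2$ and $a_1\neq0$, with Frobenius companion matrix $C_p$. Then $$r(C_p)\leq\left\{\frac{1}{4}\left(\frac{\delta+1+\sqrt{(\delta-1)^2+4\delta'}}{2}\right)+\frac{3}{4}\left(\frac{1}{2}\left(\delta_1+\delta+\sqrt{(\delta_1-\delta)^2+4\delta_2}\right)+1\right)^{1/2}\right\}^{1/4}.$$
   Context: $r(\cdot)$ is the spectral radius. The Frobenius companion matrix of $p$ is the $n\times n$ matrix $C_p$ whose first row is $(-a_n,-a_{n-1},\dots,-a_2,-a_1)$, whose entries $(k+1,k)$ equal $1$ for $k=1,\dots,n-1$, and whose other entries are $0$. Define numbers $b_j,c_j,d_j$ ($j=1,\dots,n$) by: the first row of $C_p^2$ is $(b_n,b_{n-1},\dots,b_1)$, the first row of $C_p^3$ is $(c_n,\dots,c_1)$, the first row of $C_p^4$ is $(d_n,\dots,d_1)$ (so $b_j=a_na_j-a_{j-1}$, $c_j=-a_nb_j+a_{n-1}a_j-a_{j-2}$ with $a_0=a_{-1}=0$). Set $\alpha=\sum_{j=1}^n|a_j|^2$, $\beta=\sum_{j=1}^n|b_j|^2$, $\gamma=-\sum_{j=1}^n b_j\overline{a_j}$, $\delta=\frac{1}{2}\left(\alpha+\beta+\sqrt{(\alpha-\beta)^2+4|\gamma|^2}\right)$; $\alpha'=\sum_{j=3}^n|a_j|^2$, $\beta'=\sum_{j=3}^n|b_j|^2$, $\gamma'=-\sum_{j=3}^n\overline{a_j}b_j$,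 $\delta'=\frac12\left(\alpha'+\beta'+\sqrt{(\alpha'-\beta')^2+4|\gamma'|^2}\right)$; $\alpha_1=\sum_{j=1}^n|d_j|^2$, $\beta_1=\sum_{j=1}^n|c_j|^2$, $\gamma_1=\sum_{j=1}^n d_j\overline{c_j}$, $\delta_1=\frac12\left(\alpha_1+\beta_1+\sqrt{(\alpha_1-\beta_1)^2+4|\gamma_1|^2}\right)$; $\gamma_2=\sum_{j=1}^n d_j\overline{b_j}$, $\gamma_3=\sum_{j=1}^n d_j\overline{a_j}$, $\gamma_4=\sum_{j=1}^n c_j\overline{b_j}$, $\gamma_5=\sum_{j=1}^n c_j\overline{a_j}$, and $\delta_2=\frac12\Big(|\gamma_2|^2+|\gamma_3|^2+|\gamma_4|^2+|\gamma_5|^2+\sqrt{\big((|\gamma_2|^2+|\gamma_3|^2)-(|\gamma_4|^2+|\gamma_5|^2)\big)^2+4|\gamma_2\overline{\gamma_4}+\gamma_3\overline{\gamma_5}|^2}\Big)$. *)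

(* Complex numbers: an arbitrary numClosedFieldType C
   (this includes C = complex R for R : realType, i.e. the complex numbers). *)
From HB Require Import structures.
From mathcomp Require Import all_boot all_order all_algebra.
Set Implicit Arguments. Unset Strict Implicit. Unset Printing Implicit Defensive.
Import Order.TTheory GRing.Theory Num.Theory.
Local Open Scope ring_scope.

Section Defs.
Variable C : numClosedFieldType.
Variable n : nat.

(* coefficients a_1..a_n of p(z) = z^n + a_n z^(n-1) + ... + a_2 z + a_1,
   given as a : nat -> C (only the values a 1, ..., a n are used). *)

(* Frobenius companion matrix: first row (-a_n, ..., -a_1), entries (k+1,k) = 1
   (0-based: row 0, column k holds -a_(n-k); entry (k+1,k) is 1). *)
Definition companion (a : nat -> C) : 'M[C]_n :=
  \matrix_(i < n, k < n)
    if (i == 0%N :> nat) then - a (n - k)%N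
    else if (i == k.+1 :> nat) then 1 else 0.

(* the entry x_j of the first row (x_n, x_(n-1), ..., x_1) of M, j = 1..n:
   it sits in column n - j (0-based); default 0 outside the range. *)
Definition frow (M : 'M[C]_n) (j : nat) : C :=
  if (1 <= j <= n)%N then
    match @insub nat (fun k => k < n)%N 'I_n 0%N,
          @insub nat (fun k => k < n)%N 'I_n (n - j)%N with
    | Some i, Some k => M i k
    | _, _ => 0
    end
  else 0.

Definition bcoef (a : nat -> C) (j : nat) : C := frow (companion a ^+ 2) j.
Definition ccoef (a : nat -> C) (j : nat) : C := frow (companion a ^+ 3) j.
Definition dcoef (a : nat -> C) (j : nat) : C := frow (companion a ^+ 4) j.

Definition sq (x : C) : C := `|x| ^+ 2.

Definition alpha a := \sum_(1 <= j < n.+1) sq (a j).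
Definition beta a := \sum_(1 <= j < n.+1) sq (bcoef a j).
Definition gamma a := - \sum_(1 <= j < n.+1) bcoef a j * (a j)^*.
Definition delta a := 2^-1 * (alpha a + beta a +
   sqrtC ((alpha a - beta a) ^+ 2 + 4 * sq (gamma a))).

Definition alpha' a := \sum_(3 <= j < n.+1) sq (a j).
Definition beta' a := \sum_(3 <= j < n.+1) sq (bcoef a j).
Definition gamma' a := - \sum_(3 <= j < n.+1) (a j)^* * bcoef a j.
Definition delta' a := 2^-1 * (alpha' a + beta' a +
   sqrtC ((alpha' a - beta' a) ^+ 2 + 4 * sq (gamma' a))).

Definition alpha1 a := \sum_(1 <= j < n.+1) sq (dcoef a j).
Definition beta1 a := \sum_(1 <= j < n.+1) sq (ccoef a j).
Definition gamma1 a := \sum_(1 <= j < n.+1) dcoef a j * (ccoef a j)^*.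
Definition delta1 a := 2^-1 * (alpha1 a + beta1 a +
   sqrtC ((alpha1 a - beta1 a) ^+ 2 + 4 * sq (gamma1 a))).

Definition gamma2 a := \sum_(1 <= j < n.+1) dcoef a j * (bcoef a j)^*.
Definition gamma3 a := \sum_(1 <= j < n.+1) dcoef a j * (a j)^*.
Definition gamma4 a := \sum_(1 <= j < n.+1) ccoef a j * (bcoef a j)^*.
Definition gamma5 a := \sum_(1 <= j < n.+1) ccoef a j * (a j)^*.
Definition delta2 a :=
  2^-1 * (sq (gamma2 a) + sq (gamma3 a) + sq (gamma4 a) + sq (gamma5 a) +
    sqrtC (((sq (gamma2 a) + sq (gamma3 a)) - (sq (gamma4 a) + sq (gamma5 a))) ^+ 2
           + 4 * sq (gamma2 a * (gamma4 a)^* + gamma3 a * (gamma5 a)^*))).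

Definition bound12 a : C :=
  4.-root (4^-1 * ((delta a + 1 + sqrtC ((delta a - 1) ^+ 2 + 4 * delta' a)) / 2)
         + 3 / 4 * sqrtC (2^-1 * (delta1 a + delta a +
                  sqrtC ((delta1 a - delta a) ^+ 2 + 4 * delta2 a)) + 1)).

(* r(M) <= x : the spectral radius (max modulus of eigenvalues) is at most x. *)
Definition spectral_radius_le (M : 'M[C]_n) (x : C) : Prop :=
  forall lambda : C, eigenvalue M lambda -> `|lambda| <= x.

End Defs.

(* If v C_p = l v with v <> 0, then v C_p^K = l^K v.  Row i < K of C_p^K is the
   first row R_(K-i) of C_p^(K-i) and row i >= K is the unit row e_(i-K), so
        (v C_p^K)_k = sum_(i<K) v_i R_(K-i)(k) + v_(k+K),
   where R_1 = -a, R_2 = b, R_3 = c, R_4 = d.  The constants delta, delta',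
   delta1, delta2 are top eigenvalues of 2x2 Gram matrices of such rows, and
   the whole proof rests on one "Gram bound":
        |U + V|^2 <= l_max [[p, t], [t^*, r]] (X + Y)
   if |U|^2 <= p X, |V|^2 <= r Y and |<U, V>|^2 <= |t|^2 X Y.
   For K = 2 it yields |l|^4 <= (delta + 1 + sqrt((delta-1)^2 + 4 delta'))/2;
   for K = 4, applied twice, |l|^8 <= mu + 1 with mu the top eigenvalue built
   from delta1, delta, delta2.  The theorem is the fourth root of the convex
   combination (1/4, 3/4) of these bounds. *)

From HB Require Import structures.
From mathcomp Require Import all_boot all_order all_algebra ring zify.
Import Order.TTheory GRing.Theory Num.Theory.
Local Open Scope ring_scope.
Set Implicit Arguments. Unset Strict Implicit. Unset Printing Implicit Defensive.

Section HermitianTwoByTwo.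
Variable C : numClosedFieldType.

(* The largest eigenvalue of the Hermitian matrix [[p, t], [t^*, r]], T = |t|^2. *)
Definition top_eig (p r T : C) : C :=
  2^-1 * (p + r + sqrtC ((p - r) ^+ 2 + 4 * T)).

Lemma real_le_of_sqr (d s : C) :
  d \is Num.real -> 0 <= s -> d ^+ 2 <= s ^+ 2 -> d <= s.
Proof.
move=> d_real s_ge0 le_sq; have [d_le0|d_gt0] := real_leP d_real (@real0 _).
  exact: le_trans d_le0 s_ge0.
by rewrite -ler_sqr // nnegrE ltW.
Qed.

Lemma discr_ge0 (p r T : C) : 0 <= p -> 0 <= r -> 0 <= T -> 0 <= (p - r) ^+ 2 + 4 * T.
Proof.
move=> p_ge0 r_ge0 T_ge0; rewrite addr_ge0 //; last exact: mulr_ge0.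
by rewrite -realEsqr rpredB // ger0_real.
Qed.

Lemma le_rootC_of_expr (k : nat) (x Z : C) :
  (0 < k)%N -> 0 <= x -> x ^+ k <= Z -> x <= k.-root Z.
Proof.
move=> k_gt0 x_ge0 le_xZ; have Z_ge0 : 0 <= Z by apply: le_trans le_xZ; rewrite exprn_ge0.
by rewrite -(exprCK k_gt0 x_ge0) (ler_rootC k_gt0) // nnegrE ?exprn_ge0.
Qed.

Lemma top_eig_ge0 (p r T : C) : 0 <= p -> 0 <= r -> 0 <= T -> 0 <= top_eig p r T.
Proof.
move=> p_ge0 r_ge0 T_ge0; rewrite mulr_ge0 ?invr_ge0 ?ler0n //.
by rewrite !addr_ge0 // sqrtC_ge0 discr_ge0.
Qed.

Lemma top_eigC (p r T : C) : top_eig p r T = top_eig r p T.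
Proof. by rewrite /top_eig (addrC p) -(sqrrN (p - r)) opprB. Qed.

Lemma top_eig_unit (x : C) : 0 <= x -> top_eig x 1 x = x + 1.
Proof.
move=> x_ge0; rewrite /top_eig (_ : (x - 1) ^+ 2 + 4 * x = (x + 1) ^+ 2); last by ring.
by rewrite sqrCK ?addr_ge0 ?ler01 //; field.
Qed.

(* The quadratic form of [[p, t], [t^*, r]] at (sqrt X, sqrt Y) is at most
   top_eig p r T * (X + Y); here A, B, c bound the diagonal and cross terms. *)
Lemma top_eig_quad (p r T X Y A B c : C) :
  0 <= p -> 0 <= r -> 0 <= T -> 0 <= X -> 0 <= Y ->
  A <= p * X -> B <= r * Y -> c \is Num.real -> c ^+ 2 <= 4 * (T * X * Y) ->
  A + B + c <= top_eig p r T * (X + Y).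
Proof.
move=> p_ge0 r_ge0 T_ge0 X_ge0 Y_ge0 le_A le_B c_real le_c.
have D_ge0 := discr_ge0 p_ge0 r_ge0 T_ge0.
set S := sqrtC ((p - r) ^+ 2 + 4 * T); have S_ge0 : 0 <= S by rewrite sqrtC_ge0.
have SS : S ^+ 2 = (p - r) ^+ 2 + 4 * T by rewrite sqrtCK.
have le_diff (u : C) : u \is Num.real -> u ^+ 2 = (p - r) ^+ 2 -> 0 <= S - u.
  move=> u_real u_sq; rewrite subr_ge0 real_le_of_sqr // u_sq SS.
  by rewrite lerDl mulr_ge0.
(* the top eigenvalue splits as (p X + r Y) + (al X + be Y), al * be = T *)
set al := 2^-1 * (S - (p - r)); set be := 2^-1 * (S - (r - p)).
have al_ge0 : 0 <= al by rewrite mulr_ge0 ?invr_ge0 ?ler0n ?le_diff ?rpredB ?ger0_real.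
have be_ge0 : 0 <= be.
  by rewrite mulr_ge0 ?invr_ge0 ?ler0n ?le_diff ?rpredB ?ger0_real // -sqrrN opprB.
have albe : al * be = T.
  rewrite (_ : T = 4^-1 * (S ^+ 2 - (p - r) ^+ 2)); first by rewrite /al /be; field.
  by rewrite SS; field.
have -> : top_eig p r T * (X + Y) = (p * X + r * Y) + (al * X + be * Y).
  by rewrite /top_eig /al /be -/S; field.
apply: lerD; first exact: lerD.
apply: real_le_of_sqr => //; first by apply: addr_ge0; apply: mulr_ge0.
apply: (le_trans le_c); rewrite -subr_ge0.
rewrite -albe (_ : _ - _ = (al * X - be * Y) ^+ 2); last by clearbody al be; ring.
by rewrite -realEsqr rpredB // ger0_real //; apply: mulr_ge0.
Qed.

Lemma add_conj_real (z : C) : z + z^* \is Num.real.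
Proof. by rewrite CrealE rmorphD /= conjCK addrC. Qed.

Lemma add_conj_sqr_le (z : C) : (z + z^*) ^+ 2 <= 4 * `|z| ^+ 2.
Proof.
rewrite -subr_ge0 normCK (_ : _ - _ = (z - z^*) * (z - z^*)^*).
  exact: mul_conjC_ge0.
by rewrite rmorphB /= conjCK; ring.
Qed.

End HermitianTwoByTwo.

Section FiniteSequences.
Variable C : numClosedFieldType.
Implicit Types (U V W : nat -> C) (x y : C).

Lemma sum_rev (F : nat -> C) p q :
  \sum_(q.+1 <= j < p.+1) F j = \sum_(0 <= k < p - q) F (p - k)%N.
Proof.
rewrite big_nat_rev -[X in \sum_(X <= _ < _) _]add0n big_addn subSS.
by apply: eq_big_nat => k /andP [_ kpq]; congr F; lia.
Qed.

Definition sqnorm (n : nat) U : C := \sum_(0 <= k < n) `|U k| ^+ 2.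
Definition dotp (n : nat) U V : C := \sum_(0 <= k < n) U k * (V k)^*.

Definition gram_top (n : nat) U V : C :=
  top_eig (sqnorm n U) (sqnorm n V) (`|dotp n U V| ^+ 2).

Lemma sqnorm_ge0 n U : 0 <= sqnorm n U.
Proof. by apply: sumr_ge0 => k _; rewrite exprn_ge0. Qed.

Lemma gram_top_ge0 n U V : 0 <= gram_top n U V.
Proof. by rewrite top_eig_ge0 ?sqnorm_ge0 ?exprn_ge0. Qed.

Definition pair_seq x y : nat -> C := fun k => if k == 0%N then x else y.

Lemma sqnorm2 U : sqnorm 2 U = `|U 0%N| ^+ 2 + `|U 1%N| ^+ 2.
Proof. by rewrite /sqnorm big_ltn // big_ltn // big_geq // addr0. Qed.

Lemma dotp2 U V : dotp 2 U V = U 0%N * (V 0%N)^* + U 1%N * (V 1%N)^*.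
Proof. by rewrite /dotp big_ltn // big_ltn // big_geq // addr0. Qed.

Lemma sum_vanishing (F : nat -> C) m n : (m <= n)%N ->
  (forall k, (m <= k < n)%N -> F k = 0) ->
  \sum_(0 <= k < n) F k = \sum_(0 <= k < m) F k.
Proof.
move=> le_mn F0; rewrite (big_cat_nat (leq0n m) le_mn) /= [X in _ + X]big_nat.
by rewrite [X in _ + X]big1 ?addr0.
Qed.

Lemma sqnormD n U V : sqnorm n (fun k => U k + V k) =
  sqnorm n U + sqnorm n V + (dotp n U V + (dotp n U V)^*).
Proof.
rewrite /sqnorm /dotp rmorph_sum -!big_split; apply: eq_bigr => k _ /=.
by rewrite !normCK !(rmorphD, rmorphM) /= !conjCK; ring.
Qed.

Lemma sqnormZ n x U : sqnorm n (fun k => x * U k) = `|x| ^+ 2 * sqnorm n U.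
Proof. by rewrite /sqnorm mulr_sumr; apply: eq_bigr => k _; rewrite normrM exprMn. Qed.

Lemma dotpZ n x y U V :
  dotp n (fun k => x * U k) (fun k => y * V k) = x * y^* * dotp n U V.
Proof. by rewrite /dotp mulr_sumr; apply: eq_bigr => k _; rewrite rmorphM; ring. Qed.

Lemma dotp_combl n x y U V W :
  dotp n (fun k => x * U k + y * V k) W = x * dotp n U W + y * dotp n V W.
Proof.
by rewrite /dotp !mulr_sumr -big_split; apply: eq_bigr => k _ /=; ring.
Qed.

Lemma dotp_combr n x y U V W :
  dotp n W (fun k => x * U k + y * V k) = x^* * dotp n W U + y^* * dotp n W V.
Proof.
rewrite /dotp !mulr_sumr -big_split; apply: eq_bigr => k _ /=.
by rewrite !(rmorphD, rmorphM); ring.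
Qed.

Lemma cauchy_schwarz n U V : `|dotp n U V| ^+ 2 <= sqnorm n U * sqnorm n V.
Proof.
set N := sqnorm n V; set g := dotp n U V.
have [N0|N_neq0] := eqVneq N 0.
  have V0 k : (k < n)%N -> V k = 0.
    move=> kn; move/eqP: N0; rewrite psumr_eq0 => [|i _]; last by rewrite exprn_ge0.
    move=> /allP /(_ k); rewrite mem_index_iota /= kn => /(_ isT).
    by rewrite expf_eq0 /= normr_eq0 => /eqP.
  have -> : g = 0 by rewrite /g /dotp big_nat big1 // => k /andP [_ /V0 ->]; rewrite conjC0 mulr0.
  by rewrite normr0 expr0n mulr_ge0 ?sqnorm_ge0.
have N_gt0 : 0 < N by rewrite lt_def N_neq0 sqnorm_ge0.
have N_conj : N^* = N by rewrite conj_Creal // gtr0_real.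
(* expand 0 <= |N U - g V|^2 = N (N |U|^2 - |g|^2) *)
have := sqnorm_ge0 n (fun k => N * U k + (- g) * V k).
rewrite sqnormD sqnormZ sqnormZ dotpZ -/N -/g (real_normK (gtr0_real N_gt0)).
rewrite !(rmorphM, rmorphN) /= conjCK N_conj normrN.
rewrite (_ : _ + _ = N * (N * sqnorm n U - `|g| ^+ 2)); last by rewrite normCK; ring.
by rewrite pmulr_rge0 // subr_ge0 mulrC.
Qed.

Lemma sqnorm_add_le n U V (p r T X Y : C) :
  0 <= p -> 0 <= r -> 0 <= T -> 0 <= X -> 0 <= Y ->
  sqnorm n U <= p * X -> sqnorm n V <= r * Y -> `|dotp n U V| ^+ 2 <= T * X * Y ->
  sqnorm n (fun k => U k + V k) <= top_eig p r T * (X + Y).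
Proof.
move=> p_ge0 r_ge0 T_ge0 X_ge0 Y_ge0 le_U le_V le_UV.
rewrite sqnormD; apply: top_eig_quad; rewrite ?add_conj_real //.
by apply: le_trans (add_conj_sqr_le _) _; rewrite ler_wpM2l.
Qed.

Lemma sqnorm_comb_le n x y U V :
  sqnorm n (fun k => x * U k + y * V k) <= gram_top n U V * (`|x| ^+ 2 + `|y| ^+ 2).
Proof.
apply: sqnorm_add_le; rewrite ?sqnorm_ge0 ?exprn_ge0 //.
- by rewrite sqnormZ mulrC.
- by rewrite sqnormZ mulrC.
by rewrite dotpZ !normrM norm_conjC !exprMn [X in X <= _]mulrC mulrA.
Qed.

End FiniteSequences.

Section CompanionPowers.
Variable C : numClosedFieldType.
Variable m : nat.
Variable a : nat -> C.
Local Notation n := m.+2.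
Local Notation Cp := (companion n a).

(* R_K: the first row of C_p^K as a sequence indexed by 0-based columns *)
Definition first_row (K : nat) : nat -> C := fun k => (Cp ^+ K) ord0 (inord k).

(* the entries of a row vector as a sequence, zero past the last column *)
Definition row_seq (w : 'rV[C]_n) : nat -> C :=
  fun i => if (i < n)%N then w ord0 (inord i) else 0.

Lemma row_seq_ge (w : 'rV[C]_n) i : (n <= i)%N -> row_seq w i = 0.
Proof. by rewrite /row_seq leqNgt => /negbTE ->. Qed.

Lemma companion_pow_entry K (i j : 'I_n) : (Cp ^+ K) i j =
  if (i < K)%N then (Cp ^+ (K - i)) ord0 j else ((i : nat) == (j + K)%N)%:R.
Proof.
elim: K i => [|K IH] [[|i] lt_i_n]; first by rewrite expr0 !mxE addn0.
- by rewrite expr0 !mxE addn0.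
- by rewrite /= subn0 (_ : Ordinal lt_i_n = ord0) //; apply: val_inj.
rewrite exprS -mulmxE mxE (bigD1 (inord i)) //= big1 => [|l /negbTE l_neq].
  rewrite addr0 !mxE /= inordK ?eqxx ?mul1r; last by rewrite -ltnS ltnW.
  by rewrite IH inordK ?ltnS ?subSS ?addnS ?eqSS // -ltnS ltnW.
rewrite !mxE /=; case: ifP => //= e; last by rewrite mul0r.
suff : l == inord i by rewrite l_neq.
by rewrite -val_eqE /= inordK; [rewrite -eqSS eq_sym | exact: ltnW].
Qed.

Lemma row_seq_mul_pow (v : 'rV[C]_n) K k : (k < n)%N ->
  row_seq (v *m Cp ^+ K) k =
  \sum_(0 <= i < K) row_seq v i * first_row (K - i) k + row_seq v (k + K).
Proof.
move=> kn; pose F i := row_seq v i *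
  (if (i < K)%N then first_row (K - i) k else (i == k + K)%N%:R).
have F0 i : (n <= i < n + K)%N -> F i = 0.
  by move=> /andP [ni _]; rewrite /F row_seq_ge // mul0r.
rewrite {1}/row_seq kn mxE (eq_bigr (fun i : 'I_n => F i)) => [|i _]; last first.
  by rewrite /F companion_pow_entry /row_seq ltn_ord inord_val inordK.
rewrite -(big_mkord xpredT F) -(sum_vanishing (leq_addr K n) F0).
rewrite (big_cat_nat (leq0n K) (leq_addl n K)) /=; congr (_ + _).
  by apply: eq_big_nat => i /andP [_ iK]; rewrite /F iK.
rewrite (eq_big_nat _ _ (F2 := fun i => if i == k + K then row_seq v i else 0)).
  by rewrite -big_mkcond big_nat1_eq leq_addl ltn_add2r kn.
move=> i /andP [Ki _]; rewrite /F ltnNge Ki /=.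
by case: eqP => _; rewrite ?mulr1 ?mulr0.
Qed.

Lemma sqnorm_row_split (v : 'rV[C]_n) K :
  sqnorm n (row_seq v) =
  \sum_(0 <= i < K) `|row_seq v i| ^+ 2 + sqnorm n (fun k => row_seq v (k + K)).
Proof.
have tail0 i : (n <= i < n + K)%N -> `|row_seq v i| ^+ 2 = 0.
  by move=> /andP [ni _]; rewrite row_seq_ge // normr0 expr0n.
rewrite /sqnorm -(sum_vanishing (leq_addr K n) tail0).
rewrite (big_cat_nat (leq0n K) (leq_addl n K)) /=; congr (_ + _).
by rewrite -[X in \sum_(X <= _ < _) _]add0n big_addn addnK.
Qed.

Lemma sqnorm_row_eigen (v : 'rV[C]_n) l K : v *m Cp = l *: v ->
  sqnorm n (row_seq (v *m Cp ^+ K)) = (`|l| ^+ K) ^+ 2 * sqnorm n (row_seq v).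
Proof.
move=> eig_v; have -> : v *m Cp ^+ K = l ^+ K *: v.
  elim: K => [|K IH]; first by rewrite expr0 mulmx1 scale1r.
  by rewrite exprSr -mulmxE mulmxA IH -scalemxAl eig_v scalerA exprSr.
rewrite /sqnorm mulr_sumr; apply: eq_big_nat => k /andP [_ kn].
by rewrite /row_seq kn mxE normrM exprMn normrX.
Qed.

Lemma sqnorm_row_gt0 (v : 'rV[C]_n) : v != 0 -> 0 < sqnorm n (row_seq v).
Proof.
move=> v_neq0; rewrite lt_def sqnorm_ge0 andbT; apply: contra v_neq0 => /eqP N0.
have : \sum_(i < n) `|v ord0 i| ^+ 2 = 0.
  rewrite -[in RHS]N0 /sqnorm big_mkord.
  by apply: eq_bigr => i _; rewrite /row_seq ltn_ord inord_val.
move/psumr_eq0P => v0; apply/eqP/rowP => i; rewrite mxE.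
have /eqP := v0 (fun j _ => exprn_ge0 _ (normr_ge0 _)) i isT.
by rewrite expf_eq0 /= normr_eq0 => /eqP; rewrite (ord1 0).
Qed.

Lemma frow_pow K k : (k < n)%N -> frow (Cp ^+ K) (n - k) = first_row K k.
Proof.
move=> kn; rewrite /frow subn_gt0 kn leq_subr /=.
case: insubP => [i0 _ val_i0|]; last by [].
case: insubP => [k0 _ val_k0|/negP []]; last by lia.
congr (_ _ _); apply: val_inj => /=; first by rewrite val_i0.
by rewrite val_k0 inordK //; lia.
Qed.

Lemma coef_first_row k : (k < n)%N -> a (n - k) = - first_row 1 k.
Proof. by move=> kn; rewrite /first_row expr1 mxE /= inordK // opprK. Qed.

Lemma sum_coef p q (F G : nat -> C) : (p + q = n)%N ->
  (forall k, (k < n)%N -> F (n - k)%N = G k) ->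
  \sum_(q.+1 <= j < n.+1) F j = \sum_(0 <= k < p) G k.
Proof.
move=> pqn FG; rewrite sum_rev -[X in (X - q)%N]pqn addnK.
by apply: eq_big_nat => k /andP [_ kp]; apply: FG; rewrite -pqn ltn_addr.
Qed.

Lemma deltaE : delta n a = gram_top n (first_row 2) (first_row 1).
Proof.
rewrite /delta /gram_top top_eigC /top_eig /sq.
have -> : alpha n a = sqnorm n (first_row 1).
  by apply: (sum_coef (addn0 n)) => k kn; rewrite /sq coef_first_row ?normrN.
have -> : beta n a = sqnorm n (first_row 2).
  by apply: (sum_coef (addn0 n)) => k kn; rewrite /sq /bcoef frow_pow.
have -> : gamma n a = dotp n (first_row 2) (first_row 1).
  rewrite /gamma (sum_coef (G := fun k => - (first_row 2 k * (first_row 1 k)^* )) (addn0 n)).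
    by rewrite sumrN opprK.
  by move=> k kn; rewrite /bcoef frow_pow // coef_first_row // rmorphN mulrN.
by [].
Qed.

(* delta' is that of R_2 and R_1 cut to their first m = n - 2 columns,
   since the primed sums run over j >= 3 *)
Lemma delta'E : delta' n a = gram_top m (first_row 2) (first_row 1).
Proof.
rewrite /delta' /gram_top top_eigC /top_eig /sq.
have -> : alpha' n a = sqnorm m (first_row 1).
  by apply: (sum_coef (addn2 m)) => k kn; rewrite /sq coef_first_row ?normrN.
have -> : beta' n a = sqnorm m (first_row 2).
  by apply: (sum_coef (addn2 m)) => k kn; rewrite /sq /bcoef frow_pow.
have -> : gamma' n a = dotp m (first_row 2) (first_row 1).
  rewrite /gamma' (sum_coef (G := fun k => - (first_row 2 k * (first_row 1 k)^* )) (addn2 m)).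
    by rewrite sumrN opprK.
  by move=> k kn; rewrite /bcoef frow_pow // coef_first_row // rmorphN mulNr mulrC.
by [].
Qed.

Lemma delta1E : delta1 n a = gram_top n (first_row 4) (first_row 3).
Proof.
rewrite /delta1 /gram_top /top_eig /sq.
have -> : alpha1 n a = sqnorm n (first_row 4).
  by apply: (sum_coef (addn0 n)) => k kn; rewrite /sq /dcoef frow_pow.
have -> : beta1 n a = sqnorm n (first_row 3).
  by apply: (sum_coef (addn0 n)) => k kn; rewrite /sq /ccoef frow_pow.
have -> : gamma1 n a = dotp n (first_row 4) (first_row 3).
  by apply: (sum_coef (addn0 n)) => k kn; rewrite /dcoef /ccoef !frow_pow.
by [].
Qed.

Local Notation g i j := (dotp n (first_row i) (first_row j)).

Lemma delta2E :
  delta2 n a = gram_top 2 (pair_seq (g 4 2) (g 4 1)) (pair_seq (g 3 2) (g 3 1)).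
Proof.
rewrite /delta2 /gram_top /top_eig !sqnorm2 dotp2 /pair_seq /= /sq.
have -> : gamma2 n a = g 4 2.
  by apply: (sum_coef (addn0 n)) => k kn; rewrite /dcoef /bcoef !frow_pow.
have -> : gamma4 n a = g 3 2.
  by apply: (sum_coef (addn0 n)) => k kn; rewrite /ccoef /bcoef !frow_pow.
have -> : gamma3 n a = - g 4 1.
  rewrite /gamma3 (sum_coef (G := fun k => - (first_row 4 k * (first_row 1 k)^* )) (addn0 n)).
    by rewrite sumrN.
  by move=> k kn; rewrite /dcoef frow_pow // coef_first_row // rmorphN mulrN.
have -> : gamma5 n a = - g 3 1.
  rewrite /gamma5 (sum_coef (G := fun k => - (first_row 3 k * (first_row 1 k)^* )) (addn0 n)).
    by rewrite sumrN.
  by move=> k kn; rewrite /ccoef frow_pow // coef_first_row // rmorphN mulrN.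
by rewrite !normrN rmorphN mulrNN !addrA.
Qed.

Lemma delta_ge0 : 0 <= delta n a.
Proof. by rewrite deltaE gram_top_ge0. Qed.

Lemma delta'_ge0 : 0 <= delta' n a.
Proof. by rewrite delta'E gram_top_ge0. Qed.

Lemma delta1_ge0 : 0 <= delta1 n a.
Proof. by rewrite delta1E gram_top_ge0. Qed.

Lemma delta2_ge0 : 0 <= delta2 n a.
Proof. by rewrite delta2E gram_top_ge0. Qed.

Lemma pow2_bound (v : 'rV[C]_n) :
  sqnorm n (row_seq (v *m Cp ^+ 2)) <=
  top_eig (delta n a) 1 (delta' n a) * sqnorm n (row_seq v).
Proof.
pose x0 := row_seq v 0; pose x1 := row_seq v 1.
pose u k := x0 * first_row 2 k + x1 * first_row 1 k.
pose s k := row_seq v (k + 2).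
have -> : sqnorm n (row_seq (v *m Cp ^+ 2)) = sqnorm n (fun k => u k + s k).
  apply: eq_big_nat => k /andP [_ kn].
  by rewrite row_seq_mul_pow // big_ltn // big_ltn // big_geq // addr0.
rewrite (sqnorm_row_split v 2) big_ltn // big_ltn // big_geq // addr0.
(* the tail s vanishes past column m, where delta' sees u *)
have s0 k : (m <= k < n)%N -> s k = 0 by move=> /andP [mk _]; rewrite /s row_seq_ge //; lia.
have le_mn : (m <= n)%N by lia.
have dotp_us : dotp n u s = dotp m u s.
  by apply: sum_vanishing le_mn _ => k /s0 ->; rewrite conjC0 mulr0.
have sqnorm_s : sqnorm n s = sqnorm m s.
  by apply: sum_vanishing le_mn _ => k /s0 ->; rewrite normr0 expr0n.
apply: sqnorm_add_le; rewrite ?delta_ge0 ?delta'_ge0 ?ler01 ?addr_ge0 ?exprn_ge0 ?sqnorm_ge0 //.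
- by rewrite deltaE; apply: sqnorm_comb_le.
- by rewrite mul1r.
rewrite dotp_us sqnorm_s; apply: le_trans (cauchy_schwarz m u s) _.
by rewrite ler_wpM2r ?sqnorm_ge0 // delta'E sqnorm_comb_le.
Qed.

Lemma head4_cross x0 x1 x2 x3 :
  `|dotp n (fun k => x0 * first_row 4 k + x1 * first_row 3 k)
           (fun k => x2 * first_row 2 k + x3 * first_row 1 k)| ^+ 2 <=
  delta2 n a * (`|x0| ^+ 2 + `|x1| ^+ 2) * (`|x2| ^+ 2 + `|x3| ^+ 2).
Proof.
pose G4 := pair_seq (g 4 2) (g 4 1); pose G3 := pair_seq (g 3 2) (g 3 1).
have -> : dotp n (fun k => x0 * first_row 4 k + x1 * first_row 3 k)
                 (fun k => x2 * first_row 2 k + x3 * first_row 1 k) =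
          dotp 2 (fun k => x0 * G4 k + x1 * G3 k) (pair_seq x2 x3).
  by rewrite [RHS]dotp2 dotp_combr !dotp_combl /G4 /G3 /pair_seq /=; ring.
apply: le_trans (cauchy_schwarz _ _ _) _; rewrite [X in _ * X]sqnorm2 /pair_seq /=.
by rewrite ler_wpM2r ?addr_ge0 ?exprn_ge0 // delta2E sqnorm_comb_le.
Qed.

Lemma head4_bound x0 x1 x2 x3 :
  sqnorm n (fun k => (x0 * first_row 4 k + x1 * first_row 3 k) +
                     (x2 * first_row 2 k + x3 * first_row 1 k)) <=
  top_eig (delta1 n a) (delta n a) (delta2 n a) *
    ((`|x0| ^+ 2 + `|x1| ^+ 2) + (`|x2| ^+ 2 + `|x3| ^+ 2)).
Proof.
apply: sqnorm_add_le; rewrite ?delta1_ge0 ?delta_ge0 ?delta2_ge0 ?addr_ge0 ?exprn_ge0 //.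
- by rewrite delta1E; apply: sqnorm_comb_le.
- by rewrite deltaE; apply: sqnorm_comb_le.
exact: head4_cross.
Qed.

(* |v C_p^4|^2 <= (mu + 1) |v|^2: the Gram bound with the tail, whose cross
   term is handled by Cauchy-Schwarz (top_eig mu 1 mu = mu + 1) *)
Lemma pow4_bound (v : 'rV[C]_n) :
  sqnorm n (row_seq (v *m Cp ^+ 4)) <=
  (top_eig (delta1 n a) (delta n a) (delta2 n a) + 1) * sqnorm n (row_seq v).
Proof.
pose x i := row_seq v i.
pose u k := (x 0 * first_row 4 k + x 1 * first_row 3 k) +
            (x 2 * first_row 2 k + x 3 * first_row 1 k).
pose s k := row_seq v (k + 4).
have -> : sqnorm n (row_seq (v *m Cp ^+ 4)) = sqnorm n (fun k => u k + s k).
  apply: eq_big_nat => k /andP [_ kn].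
  rewrite row_seq_mul_pow // big_ltn // big_ltn // big_ltn // big_ltn // big_geq //.
  by rewrite addr0 /u !addrA.
rewrite (sqnorm_row_split v 4) big_ltn // big_ltn // big_ltn // big_ltn // big_geq //.
rewrite addr0 (addrA (`|x 0| ^+ 2)) -/(x _).
set mu := top_eig _ _ _.
have mu_ge0 : 0 <= mu by rewrite top_eig_ge0 ?delta1_ge0 ?delta_ge0 ?delta2_ge0.
have le_u : sqnorm n u <= mu * ((`|x 0| ^+ 2 + `|x 1| ^+ 2) + (`|x 2| ^+ 2 + `|x 3| ^+ 2)).
  exact: head4_bound.
rewrite -(top_eig_unit mu_ge0); apply: sqnorm_add_le => //.
- by rewrite !addr_ge0 ?exprn_ge0.
- exact: sqnorm_ge0.
- by rewrite mul1r.
apply: le_trans (cauchy_schwarz n u s) _.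
by rewrite ler_wpM2r ?sqnorm_ge0.
Qed.

End CompanionPowers.

Theorem mainTheorem12 (C : numClosedFieldType) (n : nat) (a : nat -> C) :
  (2 <= n)%N -> a 1%N != 0 ->
  spectral_radius_le (companion n a) (bound12 n a).
Proof.
case: n => [|[|m]] // _ _ l /eigenvalueP [v eig_v v_neq0].
have v_pos := sqnorm_row_gt0 v_neq0.
have L2 : `|l| ^+ 4 <= top_eig (delta m.+2 a) 1 (delta' m.+2 a).
  by have := pow2_bound a v; rewrite (sqnorm_row_eigen _ eig_v) ler_pM2r // -exprM.
set mu := top_eig (delta1 m.+2 a) (delta m.+2 a) (delta2 m.+2 a).
have L4 : `|l| ^+ 4 <= sqrtC (mu + 1).
  apply: le_rootC_of_expr; rewrite ?exprn_ge0 // -exprM.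
  by have := pow4_bound a v; rewrite (sqnorm_row_eigen _ eig_v) ler_pM2r // -exprM.
(* |l|^4 is below the convex combination (1/4, 3/4) of the two bounds *)
apply: le_rootC_of_expr => //.
have split4 : `|l| ^+ 4 = 4^-1 * `|l| ^+ 4 + 3 / 4 * `|l| ^+ 4 by field.
rewrite split4; apply: lerD; rewrite ler_wpM2l ?mulr_ge0 ?invr_ge0 ?ler0n //.
by move: L2; rewrite /top_eig mulrC.
Qed.
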